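(* Let $A\twoheadrightarrow A'$ be a surjection of finite local $k$-algebras whose kernel $J$ satisfies $J^2=0$. Let $I'\subseteq S_{A'}$ and $I\subseteq S_A$ be graded submodules such that (1) $I'_2\subseteq q^\perp\otimes A'$; (2) $(S_A/I)_2$ is a free $A$-module; (3) the image of $I_2$ in $(S_{A'})_2$ is $I'_2$. Then there exists $g\in\mathrm{GL}_n(A)$ with $g\equiv\mathrm{Id}_n \pmod J$ and $(g\circ I)_2\subseteq q^\perp\otimes A$.
   Context: Let $k$ be a field of characteristic zero, $S=k[x_1,\dots,x_n]$, $T=k[y_1,\dots,y_n]$, with $S$ acting on $T$ by differentiation; for $f\in T_d$, $f^\perp=\{g\in S:g\circ f=0\}$. Fix a full rank quadratic form $q\in T_2$. For a $k$-algebra $A$, $S_A=S\otimes_kA=A[x_1,\dots,x_n]$, and $q^\perp\otimes A\subseteq S_A$ denotes the extension of $q^\perp$ (in degree 2, the $A$-submodule of $(S_A)_2$ annihilating $q$). $\mathrm{GL}_n(A)$ acts on $S_A$ by $A$-linear substitution of the variables $x_1,\dots,x_n$, and $g\circ I$ denotes the image of $I$. *)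

From HB Require Import structures.
From mathcomp Require Import all_boot all_order all_algebra.
From mathcomp Require Import mpoly.
Set Implicit Arguments. Unset Strict Implicit. Unset Printing Implicit Defensive.
Import GRing.Theory.
Local Open Scope ring_scope.

Definition fin_dim (k : fieldType) (A : comUnitAlgType k) : Prop :=
  exists s : seq A, forall a : A,
    exists c : 'I_(size s) -> k, a = \sum_(i < size s) c i *: s`_i.

(* A is local: the non-units form an ideal (A is nonzero since it is a nzRing). *)
Definition is_local (A : comUnitRingType) : Prop :=
  forall x y : A, x \isn't a GRing.unit -> y \isn't a GRing.unit ->
    (x + y) \isn't a GRing.unit.

(* Apolarity action of S_A on T_A by differentiation:
   (sum_m g_m x^m) o h = sum_m g_m d^m h. *)
Definition apolar (n : nat) (A : ringType) (g h : {mpoly A[n]}) : {mpoly A[n]} :=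
  \sum_(m <- msupp g) g@_m *: mderivm m h.

(* Degree-2 part of q^perp (x) A : the degree-2 forms annihilating q. *)
Definition qperp2 (k : fieldType) (A : comUnitAlgType k) (n : nat)
    (q : {mpoly k[n]}) (g : {mpoly A[n]}) : Prop :=
  g \is 2.-homog /\ apolar g (map_mpoly (in_alg A) q) = 0.

(* Hessian matrix of a quadratic form; q has full rank iff it is invertible. *)
Definition hessian (k : fieldType) (n : nat) (q : {mpoly k[n]}) : 'M[k]_n :=
  \matrix_(i < n, j < n) ((mderiv j (mderiv i q))@_0%MM).

Definition full_rank_quadric (k : fieldType) (n : nat) (q : {mpoly k[n]}) : Prop :=
  q \is 2.-homog /\ hessian q \in unitmx.

Definition act (A : comRingType) (n : nat) (g : 'M[A]_n) (p : {mpoly A[n]})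
    : {mpoly A[n]} :=
  p \mPo [tuple \sum_(j < n) g i j *: 'X_j | i < n].

Definition hcomp (A : ringType) (n : nat) (d : nat) (p : {mpoly A[n]})
    : {mpoly A[n]} :=
  \sum_(m <- msupp p | mdeg m == d) p@_m *: 'X_[m].

Definition graded_submod (A : comRingType) (n : nat) (I : {mpoly A[n]} -> Prop)
    : Prop :=
  [/\ I 0,
      (forall p r, I p -> I r -> I (p + r)),
      (forall (a : A) p, I p -> I (a *: p)) &
      (forall d p, I p -> I (hcomp d p))].

(* (S_A/I)_2 is a free A-module: there are b_1..b_r in (S_A)_2 whose classes
   form a basis of (S_A)_2 / I_2. *)
Definition free_quot2 (A : comRingType) (n : nat) (I : {mpoly A[n]} -> Prop)
    : Prop :=
  exists r (b : 'I_r -> {mpoly A[n]}),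
    [/\ (forall i, b i \is 2.-homog),
        (forall p : {mpoly A[n]}, p \is 2.-homog ->
           exists c : 'I_r -> A, I (p - \sum_(i < r) c i *: b i)) &
        (forall c : 'I_r -> A, I (\sum_(i < r) c i *: b i) -> forall i, c i = 0)].

(* For quadratic forms p, h the apolar action p o h is the constant
   <h, p> = sum_m p_m (d^m h)(0), so the condition "p in q^perp (x) A" is the
   vanishing of the linear functional L = <q, ->.  Let G = (L(x_i x_j)) be the
   Gram matrix of L; it is the Hessian of q, symmetric and invertible.
   - By hypotheses (1) and (3), L maps I_2 into the kernel J of A -> A'.
   - Freeness of (S_A/I)_2 gives a retraction rho onto I_2 on quadrics, such
     that the complementary parts p - rho p of the elements of I_2 recombine
     to zero; Psi = (L(rho(x_i x_j))) is then a symmetric matrix over J.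
   - With E = -Psi G^-1 / 2 (entries in J, so their products vanish) and
     g = 1 + E, the congruence g G g^T = G - Psi holds, i.e.
     L(g(x_i x_j)) = L(x_i x_j - rho(x_i x_j)); by linearity L(g P) = 0 for
     every P in I_2, which is the theorem since g commutes with taking
     homogeneous components. *)

From HB Require Import structures.
From mathcomp Require Import all_boot all_order all_algebra.
From mathcomp Require Import mpoly.
From mathcomp.multinomials Require Import ssrcomplements.
From Stdlib Require Import IndefiniteDescription.
Import GRing.Theory.
Local Open Scope ring_scope.
Set Implicit Arguments. Unset Strict Implicit. Unset Printing Implicit Defensive.

Section QuadraticPairing.
Variables (n : nat) (R : comRingType).
Implicit Types (p h : {mpoly R[n]}).

Definition qpair h p : R := \sum_(m : 'X_{1..n < 3}) p@_m * (mderivm m h)@_0.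

Lemma qpair_is_linear h : scalar (qpair h).
Proof.
move=> a p r; rewrite /qpair mulr_sumr -big_split; apply: eq_bigr => m _.
by rewrite mcoeffD mcoeffZ mulrDl mulrA.
Qed.

HB.instance Definition _ h :=
  GRing.isLinear.Build R {mpoly R[n]} R _ (qpair h) (qpair_is_linear h).

Lemma homog2_msize p : p \is 2.-homog -> (msize p <= 3)%N.
Proof.
move=> hp; rewrite mmeasureE.
by apply/bigmax_leqP_seq => m + _ => /(dhomog_mf hp) ->.
Qed.

Lemma apolar_bounded p h : (msize p <= 3)%N ->
  apolar p h = \sum_(m : 'X_{1..n < 3}) p@_m *: mderivm m h.
Proof.
move=> le_p3; rewrite /apolar (big_mksub 'X_{1..n < 3}) /=; first last.
- by move=> x /msize_mdeg_lt/leq_trans/(_ le_p3).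
- exact: msupp_uniq.
by rewrite big_rmcond //= => m /memN_msupp_eq0 ->; rewrite scale0r.
Qed.

Lemma mderivm_homog2 h m : h \is 2.-homog -> mdeg m = 2%N ->
  mderivm m h = ((mderivm m h)@_0)%:MP.
Proof.
move=> hh dm; apply/mpolyP => m'; rewrite mcoeffC.
have [->|nz] := eqVneq m' 0%MM; first by rewrite mulr1.
rewrite mulr0 mcoeff_mderivm (dhomog_nemf_coeff hh) ?mul0rn //.
change (mdeg (m + m')%MM != 2%N); rewrite mdegD dm -{2}[2%N]addn0 eqn_add2l.
by rewrite mdeg_eq0.
Qed.

Lemma apolar_homog2 p h : p \is 2.-homog -> h \is 2.-homog ->
  apolar p h = (qpair h p)%:MP.
Proof.
move=> hp hh; rewrite apolar_bounded ?homog2_msize // /qpair raddf_sum /=.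
apply: eq_bigr => m _; have [dm|ndm] := eqVneq (mdeg m) 2%N.
  by rewrite {1}(mderivm_homog2 hh dm) -mul_mpolyC -rmorphM.
by rewrite (dhomog_nemf_coeff hp ndm) scale0r mul0r mpolyC0.
Qed.

Lemma qpair_XX h i j : qpair h ('X_i * 'X_j) = (h^`M(i)^`M(j))@_0.
Proof.
have lt3 : (mdeg (U_(i) + U_(j))%MM < 3)%N by rewrite mdegD !mdeg1.
rewrite -mpolyXD /qpair (bigD1 (BMultinom lt3)) //= big1 ?addr0.
  by rewrite mcoeffX eqxx mul1r mderivmDm !mderivmU1m.
move=> m' ne; rewrite mcoeffX; case: eqP => [e|]; last by rewrite mul0r.
by move: ne; rewrite bmeqP /= e eqxx.
Qed.

Definition gram h : 'M[R]_n := \matrix_(i, j) qpair h ('X_i * 'X_j).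

Lemma gram_sym h : (gram h)^T = gram h.
Proof. by apply/matrixP => i j; rewrite !mxE mulrC. Qed.

End QuadraticPairing.

Lemma map_homog (n : nat) (R S : ringType) (phi : {additive R -> S}) d
    (p : {mpoly R[n]}) :
  p \is d.-homog -> map_mpoly phi p \is d.-homog.
Proof.
move=> hp; apply/dhomogP => m; rewrite mcoeff_msupp mcoeff_map_mpoly => nz.
apply: (dhomog_mf hp); rewrite mcoeff_msupp; apply: contraNneq nz => ->.
by rewrite raddf0.
Qed.

Lemma map_mderivm (n : nat) (R S : ringType) (phi : {rmorphism R -> S}) m
    (p : {mpoly R[n]}) :
  map_mpoly phi (mderivm m p) = mderivm m (map_mpoly phi p).
Proof.
apply/mpolyP => m'.
by rewrite mcoeff_map_mpoly !mcoeff_mderivm raddfMn mcoeff_map_mpoly.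
Qed.

Lemma map_qpair (n : nat) (R S : comRingType) (phi : {rmorphism R -> S})
    (h p : {mpoly R[n]}) :
  phi (qpair h p) = qpair (map_mpoly phi h) (map_mpoly phi p).
Proof.
rewrite /qpair rmorph_sum; apply: eq_bigr => m _.
by rewrite rmorphM !mcoeff_map_mpoly -map_mderivm mcoeff_map_mpoly.
Qed.

Section QuadricPerp.
Variables (k : fieldType) (A : comUnitAlgType k) (n : nat) (q : {mpoly k[n]}).
Hypothesis q2 : q \is 2.-homog.

Lemma qperp2_qpair (p : {mpoly A[n]}) : p \is 2.-homog ->
  qperp2 q p <-> qpair (map_mpoly (in_alg A) q) p = 0.
Proof.
move=> hp; rewrite /qperp2 apolar_homog2 ?map_homog //.
split=> [[_ /eqP]|z]; first by rewrite mpolyC_eq0 => /eqP.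
by rewrite z mpolyC0.
Qed.

Lemma gram_hessian :
  gram (map_mpoly (in_alg A) q) = map_mx (in_alg A) (hessian q).
Proof.
apply/matrixP => i j; rewrite !mxE qpair_XX -!mderivmU1m -!map_mderivm.
by rewrite mcoeff_map_mpoly !mderivmU1m.
Qed.

Lemma gram_unit : full_rank_quadric q -> gram (map_mpoly (in_alg A) q) \in unitmx.
Proof.
case=> _ hess_unit.
by rewrite gram_hessian unitmxE det_map_mx rmorph_unit -?unitmxE.
Qed.

Lemma half_in_alg : [pchar k] =i pred0 -> in_alg A 2%:R^-1 *+ 2 = 1.
Proof.
move=> chark; have two_neq0 : (2%:R : k) != 0.
  by rewrite ((pcharf0P _).1 chark 2).
by rewrite -rmorphMn -mulr_natr mulVf // rmorph1.
Qed.

End QuadricPerp.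

Section LinearSubstitution.
Variables (n : nat) (A : comRingType) (g : 'M[A]_n).

Lemma act_X i : act g 'X_i = \sum_(j < n) g i j *: 'X_j.
Proof. by rewrite /act comp_mpolyXU -tnth_nth tnth_mktuple. Qed.

Lemma act_homog d (p : {mpoly A[n]}) : p \is d.-homog -> act g p \is d.-homog.
Proof.
have lin i : \sum_(j < n) g i j *: 'X_j \is 1.-homog.
  by apply: rpred_sum => j _; apply: rpredZ; rewrite dhomogX; apply/eqP/mdeg1.
move=> hp; rewrite /act comp_mpolyE big_seq; apply: rpred_sum => m.
move=> /(dhomog_mf hp) dm; apply: rpredZ.
have -> : d = (\sum_(i < n) m i)%N by rewrite -dm; exact: mdegE.
elim/big_rec2: _ => [|i x y _ hy]; first exact: dhomog1.
apply: dhomogM hy; rewrite tnth_mktuple.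
by have := dhomogMn (m i) (lin i); rewrite mul1n.
Qed.

HB.instance Definition _ := GRing.LRMorphism.copy (act g)
  (comp_mpoly [tuple \sum_(j < n) g i j *: 'X_j | i < n]).

HB.instance Definition _ d := GRing.Linear.copy (@hcomp A n d) (pihomog mdeg d).

Lemma hcomp_act d (p : {mpoly A[n]}) : hcomp d (act g p) = act g (hcomp d p).
Proof.
have lt_d : (d < msize p + d.+1)%N by rewrite addnS ltnS leq_addl.
rewrite {1}(@pihomog_partitionE _ _ mdeg _ _ (leq_addr d.+1 (msize p))).
rewrite [act g _]raddf_sum raddf_sum [LHS](bigD1 (Ordinal lt_d)) //=.
rewrite [X in _ + X]big1 ?addr0.
  by rewrite [hcomp _ _]pihomog_dE //; apply: act_homog; apply: pihomogP.
move=> e ne; apply: (@pihomog_ne0 _ _ _ e); last first.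
  by apply: act_homog; apply: pihomogP.
by apply: contraNneq ne => de; apply/eqP/val_inj; rewrite /= de.
Qed.

Lemma act_homog_hcomp d (p : {mpoly A[n]}) :
  act g p \is d.-homog -> act g p = act g (hcomp d p).
Proof. by move=> hp; rewrite -hcomp_act [hcomp _ _]pihomog_dE. Qed.

Lemma qpair_act_XX (h : {mpoly A[n]}) i j :
  qpair h (act g ('X_i * 'X_j)) = (g *m gram h *m g^T) i j.
Proof.
rewrite rmorphM /= !act_X mulr_sumr raddf_sum !mxE /=.
apply: eq_bigr => b _; rewrite mulr_suml raddf_sum !mxE mulr_suml /=.
apply: eq_bigr => a _; rewrite -scalerAl -scalerAr !linearZ /= !mxE.
by rewrite -mulrA [_ * g j b]mulrC.
Qed.

End LinearSubstitution.

Section SquareZeroCongruence.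
Variables (A : comUnitRingType) (m : nat).
Implicit Types (E F H M Psi : 'M[A]_m).

Lemma mulmx_square_zero E F M :
  (forall i j l r, E i j * F l r = 0) -> E *m M *m F = 0.
Proof.
move=> EF; apply/matrixP => i j; rewrite !mxE big1 // => l _.
rewrite !mxE mulr_suml big1 // => a _.
by rewrite mulrAC EF mul0r.
Qed.

Lemma unitmx_1D_square_zero E :
  (forall i j l r, E i j * E l r = 0) -> 1%:M + E \in unitmx.
Proof.
move=> EE; have EE0 : E *m E = 0.
  by rewrite -[E in E *m _]mulmx1 mulmx_square_zero.
suff /mulmx1_unit[] : (1%:M + E) *m (1%:M - E) = 1%:M by [].
by rewrite mulmxDl mul1mx mulmxBr mulmx1 EE0 subr0 subrK.
Qed.

Lemma square_zero_congruence H Psi (c : A) :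
  H^T = H -> H \in unitmx -> Psi^T = Psi -> c *+ 2 = 1 ->
  let E := - (c *: (Psi *m invmx H)) in
  (forall i j l r, E i j * E l r = 0) ->
  (1%:M + E) *m H *m (1%:M + E)^T = H - Psi.
Proof.
move=> Hsym Hu Psym c2 E EE.
have EH : E *m H = - (c *: Psi) by rewrite mulNmx -scalemxAl mulmxKV.
have HEt : H *m E^T = - (c *: Psi).
  by rewrite -{1}Hsym -trmx_mul EH raddfN /= linearZ /= Psym.
have EHE : E *m H *m E^T = 0.
  by apply: mulmx_square_zero => i j l r; rewrite [E^T _ _]mxE EE.
rewrite raddfD /= trmx1 mulmxDl mul1mx !mulmxDr mulmx1 mulmxDl HEt EHE addr0.
by rewrite EH -addrA -opprD -scalerDl -mulr2n c2 scale1r.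
Qed.

Lemma map_mx_eq0_square_zero (A' : nzRingType) (f : {rmorphism A -> A'}) E :
  (forall x y : A, f x = 0 -> f y = 0 -> x * y = 0) ->
  map_mx f E = 0 -> forall i j l r, E i j * E l r = 0.
Proof.
move=> J2 fE i j l r; apply: J2.
  by have := congr1 (fun M : 'M[A']_m => M i j) fE; rewrite !mxE.
by have := congr1 (fun M : 'M[A']_m => M l r) fE; rewrite !mxE.
Qed.

End SquareZeroCongruence.

Section QuadraticExpansion.
Variables (n : nat) (A : comRingType).

Lemma homog2E (P : {mpoly A[n]}) : P \is 2.-homog ->
  P = \sum_(m : 'X_{1..n < 3} | mdeg m == 2%N) P@_m *: 'X_[m].
Proof.
by move=> hP; rewrite -(pihomogwE mdeg 2 (homog2_msize hP)) pihomog_dE.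
Qed.

Lemma homog2_XX i j : ('X_i * 'X_j : {mpoly A[n]}) \is 2.-homog.
Proof.
have X1 l : ('X_l : {mpoly A[n]}) \is 1.-homog.
  by rewrite dhomogX; apply/eqP/mdeg1.
exact: dhomogM (X1 i) (X1 j).
Qed.

Lemma mdeg2P (m : 'X_{1..n}) :
  mdeg m = 2%N -> exists i j, m = (U_(i) + U_(j))%MM.
Proof.
move=> dm; have [i mi] : exists i, m i != 0%N.
  apply/existsP; apply: contraT; rewrite negb_exists => /forallP m0.
  suff m_eq0 : m = 0%MM by move: dm; rewrite m_eq0 mdeg0.
  by apply/mnmP => i; rewrite mnm0E; apply/eqP/negbNE/m0.
have le_im : (U_(i) <= m)%MM by rewrite lep1mP.
have : mdeg (m - U_(i))%MM == 1%N.
  by rewrite -(eqn_add2r 1) -{1}(mdeg1 i) -mdegD submK // dm.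
by case/mdeg1P => j /eqP hj; exists i, j; rewrite -hj addmC submK.
Qed.

End QuadraticExpansion.

(* The recombination of the quadrics x^m - rho x^m along the coefficients of P;
   for rho a retraction onto I_2 it measures how far P is from I_2. *)
Definition recombine (n : nat) (A : comRingType)
    (rho : {mpoly A[n]} -> {mpoly A[n]}) (P : {mpoly A[n]}) : {mpoly A[n]} :=
  \sum_(m : 'X_{1..n < 3} | mdeg m == 2%N) P@_m *: ('X_[m] - rho 'X_[m]).

Lemma qpair_act_homog2 (n : nat) (A : comRingType) (h : {mpoly A[n]})
    (g : 'M[A]_n) (rho : {mpoly A[n]} -> {mpoly A[n]}) :
  (forall i j, qpair h (act g ('X_i * 'X_j))
               = qpair h ('X_i * 'X_j - rho ('X_i * 'X_j))) ->
  forall P, P \is 2.-homog ->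
    qpair h (act g P) = qpair h (recombine rho P).
Proof.
move=> gXX P hP; rewrite {1}(homog2E hP) /recombine [act g _]raddf_sum.
rewrite !raddf_sum /=.
apply: eq_bigr => m /eqP dm.
have [i [j ->]] := mdeg2P dm.
by rewrite !linearZ /= mpolyXD gXX.
Qed.

Section FreeQuotient.
Variables (n : nat) (A : comRingType) (I : {mpoly A[n]} -> Prop).
Hypothesis gI : graded_submod I.

Lemma graded_submod_sum (T : Type) (s : seq T) (P : pred T)
    (F : T -> {mpoly A[n]}) :
  (forall i, P i -> I (F i)) -> I (\sum_(i <- s | P i) F i).
Proof.
case: gI => I0 ID _ _ IF; elim/big_rec: _ => // i x Pi Ix.
exact: ID (IF i Pi) Ix.
Qed.

Lemma graded_submodB p r : I p -> I r -> I (p - r).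
Proof.
by case: gI => _ ID IZ _ Ip Ir; rewrite -scaleN1r; apply: ID => //; apply: IZ.
Qed.

(* Freeness of (S_A/I)_2 yields a retraction rho of the quadrics onto I_2
   whose complementary parts p - rho p, recombined along an element of I_2,
   give zero: they form a quadric of I_2 lying in the span of the free basis. *)
Lemma free_quot2_retraction : free_quot2 I ->
  exists rho : {mpoly A[n]} -> {mpoly A[n]},
    (forall p, p \is 2.-homog -> I (rho p) /\ rho p \is 2.-homog) /\
    (forall P, I P -> P \is 2.-homog -> recombine rho P = 0).
Proof.
case=> r [b [b2 b_span b_free]].
have coordP p :
    {c : 'I_r -> A | p \is 2.-homog -> I (p - \sum_(i < r) c i *: b i)}.
  apply: constructive_indefinite_description.
  have [hp|_] := boolP (p \is 2.-homog); last by exists (fun=> 0).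
  by have [c hc] := b_span p hp; exists c.
pose coord p := sval (coordP p).
exists (fun p => p - \sum_(i < r) coord p i *: b i); split.
  move=> p hp; split; first exact: (svalP (coordP p)).
  by apply: rpredB => //; apply: rpred_sum => i _; apply/rpredZ/b2.
move=> P IP hP; rewrite /recombine; set Q := \sum_(m | _) _.
have Q_span : Q = \sum_(i < r)
    (\sum_(m : 'X_{1..n < 3} | mdeg m == 2%N) P@_m * coord 'X_[m] i) *: b i.
  rewrite /Q; under eq_bigr do rewrite opprB addrC subrK scaler_sumr.
  rewrite exchange_big; apply: eq_bigr => i _; rewrite scaler_suml.
  by apply: eq_bigr => m _; rewrite scalerA.
have QI : I Q.
  rewrite /Q; under eq_bigr do rewrite scalerBr.
  rewrite sumrB -homog2E //; apply: graded_submodB => //.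
  apply: graded_submod_sum => m /eqP dm; case: gI => _ _ IZ _; apply: IZ.
  by apply: (svalP (coordP _)); rewrite dhomogX; apply/eqP.
rewrite Q_span in QI *; rewrite big1 // => i _.
by rewrite (b_free _ QI) scale0r.
Qed.

End FreeQuotient.

Lemma qpair_in_kernel (k : fieldType) (A A' : comUnitAlgType k) (n : nat)
    (q : {mpoly k[n]}) (f : {lrmorphism A -> A'})
    (I : {mpoly A[n]} -> Prop) (I' : {mpoly A'[n]} -> Prop) :
  q \is 2.-homog ->
  (forall p', I' p' -> p' \is 2.-homog -> qperp2 q p') ->
  (forall p, I p -> p \is 2.-homog -> I' (map_mpoly f p)) ->
  forall P, I P -> P \is 2.-homog -> f (qpair (map_mpoly (in_alg A) q) P) = 0.
Proof.
move=> q2 perp' fI P IP hP; have fP2 := map_homog f hP.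
have /qperp2_qpair := perp' _ (fI P IP hP) fP2; move/(_ q2 fP2) => <-.
rewrite map_qpair; congr qpair; apply/mpolyP => m.
by rewrite !mcoeff_map_mpoly /= rmorph_alg.
Qed.

Unset Implicit Arguments.
Theorem theorem2p4
  (k : fieldType) (chark : [pchar k] =i pred0)
  (n : nat) (q : {mpoly k[n]}) (hq : full_rank_quadric q)
  (A A' : comUnitAlgType k)
  (finA : fin_dim A) (locA : is_local A)
  (finA' : fin_dim A') (locA' : is_local A')
  (f : {lrmorphism A -> A'})
  (f_surj : forall a' : A', exists a : A, f a = a')
  (J2 : forall x y : A, f x = 0 -> f y = 0 -> x * y = 0)
  (I : {mpoly A[n]} -> Prop) (I' : {mpoly A'[n]} -> Prop)
  (gI : graded_submod I) (gI' : graded_submod I')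
  (h1 : forall p' : {mpoly A'[n]}, I' p' -> p' \is 2.-homog -> qperp2 q p')
  (h2 : free_quot2 I)
  (h3 : forall p' : {mpoly A'[n]},
      (I' p' /\ p' \is 2.-homog) <->
      (exists p : {mpoly A[n]}, [/\ I p, p \is 2.-homog & map_mpoly f p = p'])) :
  exists g : 'M[A]_n,
    [/\ g \in unitmx,
        map_mx f g = 1%:M &
        forall p' : {mpoly A[n]}, (exists p, I p /\ act g p = p') ->
          p' \is 2.-homog -> qperp2 q p'].
Proof.
have q2 := hq.1; set q1 := map_mpoly (in_alg A) q.
have fI p : I p -> p \is 2.-homog -> I' (map_mpoly f p).
  by move=> Ip hp; have [] := (h3 _).2 (ex_intro _ p (And3 Ip hp erefl)).
have [rho [rhoI rho_comb]] := free_quot2_retraction gI h2.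
(* Psi records the defect of I_2 from q^perp; it has entries in J. *)
pose G := gram q1.
pose Psi : 'M[A]_n := \matrix_(i, j) qpair q1 (rho ('X_i * 'X_j)).
pose c : A := in_alg A 2%:R^-1.
pose E := - (c *: (Psi *m invmx G)).
have fE : map_mx f E = 0.
  have fPsi : map_mx f Psi = 0.
    apply/matrixP => i j; rewrite !mxE; apply: qpair_in_kernel h1 fI _ _ _ => //;
      by have [] := rhoI _ (@homog2_XX _ _ i j).
  by rewrite map_mxN map_mxZ map_mxM fPsi mul0mx scaler0 oppr0.
have EE := map_mx_eq0_square_zero J2 fE.
(* g = 1 + E realises the congruence g G g^T = G - Psi. *)
have gXX i j : qpair q1 (act (1%:M + E) ('X_i * 'X_j))
               = qpair q1 ('X_i * 'X_j - rho ('X_i * 'X_j)).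
  rewrite qpair_act_XX square_zero_congruence ?gram_sym ?gram_unit
          ?half_in_alg //; last first.
    by apply/matrixP => a b; rewrite !mxE mulrC.
  by rewrite raddfB !mxE.
exists (1%:M + E); split; first exact: unitmx_1D_square_zero.
  by rewrite map_mxD map_scalar_mx rmorph1 fE addr0.
move=> p' [p [Ip <-]] /act_homog_hcomp ->.
have p2 : hcomp 2 p \is 2.-homog by exact: pihomogP.
have Ip2 : I (hcomp 2 p) by case: gI => _ _ _; apply.
apply/qperp2_qpair => //; first exact: act_homog.
by rewrite (qpair_act_homog2 gXX) // rho_comb // raddf0.
Qed.
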